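(* Let $M$ be an $n\times n$ Hermitian positive definite matrix which is irreducible. If the argument of each non-zero off-diagonal entry of $-M$ lies in $\left(-\frac{\pi}{2^n},\frac{\pi}{2^n}\right)$, then each entry of $M^{-1}$ has argument in $\left(-\frac{\pi}{2}+\frac{\pi}{2^n},\ \frac{\pi}{2}-\frac{\pi}{2^n}\right)$.
   Context: A square matrix is irreducible if it cannot be brought into block-diagonal form (with at least two diagonal blocks) by a simultaneous permutation of its rows and columns. *)

From HB Require Import structures.
From mathcomp Require Import all_boot all_order all_algebra all_fingroup.
From mathcomp Require Import complex.
From mathcomp Require Import reals trigo.
Set Implicit Arguments. Unset Strict Implicit. Unset Printing Implicit Defensive.
Import Order.TTheory GRing.Theory Num.Theory.
Local Open Scope ring_scope.

(* Principal argument of z = a + i b in (-pi, pi]: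
   Arg z = acos (a/|z|) if b >= 0, and - acos (a/|z|) if b < 0.
   (Its value at z = 0 is irrelevant: we always require z != 0.) *)
Definition Arg {R : realType} (z : R[i]) : R :=
  let r := Num.sqrt (complex.Re z ^+ 2 + complex.Im z ^+ 2) in
  if 0 <= complex.Im z then acos (complex.Re z / r) else - acos (complex.Re z / r).

Definition arg_in {R : realType} (z : R[i]) (a b : R) : Prop :=
  z != 0 /\ a < Arg z < b.

Definition adjmx {R : realType} (n : nat) (M : 'M[R[i]]_n) : 'M[R[i]]_n :=
  (map_mx (@conjc R) M)^T.

Definition hermitian_mx {R : realType} (n : nat) (M : 'M[R[i]]_n) : Prop :=
  adjmx M = M.

(* x^* M x is a positive real for every non-zero x (0 < w in R[i] means
   w is real and positive). *)
Definition posdef_mx {R : realType} (n : nat) (M : 'M[R[i]]_n) : Prop :=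
  forall x : 'cV[R[i]]_n, x != 0 ->
    0 < ((map_mx (@conjc R) x)^T *m M *m x) 0 0.

(* M is reducible_mx iff, after a simultaneous permutation s of rows and
   columns, it is block diagonal with (at least) two diagonal blocks, of sizes
   k and n - k with 0 < k < n: every entry (i, j) of the permuted matrix with
   i, j in different blocks is zero. *)
Definition reducible_mx {R : realType} (n : nat) (M : 'M[R[i]]_n) : Prop :=
  exists (s : 'S_n) (k : nat), (0 < k < n)%N /\
    forall i j : 'I_n, (i < k)%N != (j < k)%N ->
      col_perm s (row_perm s M) i j = 0.

Definition irreducible_mx {R : realType} (n : nat) (M : 'M[R[i]]_n) : Prop :=
  ~ reducible_mx M.

(* Let [sector a] be the closed sector {z | cos a |z| <= Re z}: 0 and the z with
   |Arg z| <= a. For a, b in [0, pi/2], sectors are closed under sums and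
   sector a * sector b lies in sector (a + b); for a < pi/2 a sum of elements of
   sector a vanishes only if every summand does.
   Suppose the off-diagonal entries of -M lie in sector t. Eliminating the last
   index, the Schur complement N = M' - b b^* / d has the off-diagonal entries of
   -N in sector 2t, N^-1 is the leading principal block of M^-1, and the last
   column of M^-1 is -N^-1 b / d. By induction on n the off-diagonal entries of
   M^-1 lie in sector ((2^(n-1) - 1) t) and the diagonal ones are positive; for
   t < pi/2^n this is strictly inside the sector of half-angle pi/2 - pi/2^n.
   Irreducibility, inherited by N, keeps all these entries non-zero. *)

From HB Require Import structures.
From mathcomp Require Import all_boot all_order all_algebra all_fingroup.
From mathcomp Require Import complex.
From mathcomp Require Import reals trigo.
From mathcomp Require Import ring lra.
Import Order.TTheory GRing.Theory Num.Theory ComplexField.Normc.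
Set Implicit Arguments. Unset Strict Implicit. Unset Printing Implicit Defensive.
Local Open Scope ring_scope.

Section Sector.
Variable R : realType.
Local Notation C := R[i].
Implicit Types (a b : R) (z w : C).

Lemma ler_cos a b : 0 <= a -> a <= b -> b <= pi -> cos b <= cos a.
Proof.
move=> a0 ab bpi; have [->//|neab] := eqVneq a b.
rewrite ltW // ltr_cos; first by rewrite lt_neqAle neab.
  by rewrite in_itv /=; lra.
by rewrite in_itv /=; lra.
Qed.

Definition sector a z : Prop := cos a * normc z <= complex.Re z.

Lemma normc_ReIm z : normc z = Num.sqrt (complex.Re z ^+ 2 + complex.Im z ^+ 2).
Proof. by case: z. Qed.

Lemma normc_ge0 z : 0 <= normc z.
Proof. by rewrite normc_ReIm sqrtr_ge0. Qed.

Lemma normc_gt0 z : z != 0 -> 0 < normc z.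
Proof.
move=> nz; rewrite lt_neqAle normc_ge0 andbT eq_sym.
by apply: contra nz => /eqP/eq0_normc ->.
Qed.

Lemma sqr_normc_ReIm z : normc z ^+ 2 = complex.Re z ^+ 2 + complex.Im z ^+ 2.
Proof. by rewrite normc_ReIm sqr_sqrtr // addr_ge0 // sqr_ge0. Qed.

Lemma Re_le_normc z : `|complex.Re z| <= normc z.
Proof.
rewrite -ler_sqr ?nnegrE ?normc_ge0 // sqr_normc_ReIm real_normK ?num_real //.
by rewrite lerDl sqr_ge0.
Qed.

Lemma ReD z w : complex.Re (z + w) = complex.Re z + complex.Re w.
Proof. by case: z; case: w. Qed.

Lemma sector0 a : sector a 0.
Proof. by rewrite /sector normc0 mulr0. Qed.

Lemma sector_gt0 z : 0 < z -> sector 0 z.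
Proof.
case: z => x y; rewrite ltcE /= => /andP [/eqP -> x0].
by rewrite /sector /= cos0 mul1r expr0n addr0 sqrtr_sqr ger0_norm // ltW.
Qed.

Lemma sectorJ a z : sector a z -> sector a z^*%C.
Proof. by case: z => x y; rewrite /sector /= sqrrN. Qed.

Lemma sector_le a b z : 0 <= a <= b -> b <= pi -> sector a z -> sector b z.
Proof.
move=> /andP [a0 ab] bpi; apply: le_trans.
by rewrite ler_wpM2r ?normc_ge0 ?ler_cos.
Qed.

Lemma sector_Re_ge0 a z : 0 <= cos a -> sector a z -> 0 <= complex.Re z.
Proof. by move=> c0; apply: le_trans; rewrite mulr_ge0 ?normc_ge0. Qed.

Lemma sector_Re_gt0 a z : 0 < cos a -> sector a z -> z != 0 -> 0 < complex.Re z.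
Proof. by move=> c0 hz nz; apply: lt_le_trans hz; rewrite mulr_gt0 ?normc_gt0. Qed.

Lemma sectorD a z w : 0 <= cos a -> sector a z -> sector a w -> sector a (z + w).
Proof.
move=> c0 hz hw; rewrite /sector ReD; apply: le_trans (lerD hz hw).
by rewrite -mulrDr ler_wpM2l // le_normcD.
Qed.

Lemma sector_sum a (I : finType) (P : pred I) (F : I -> C) :
  0 <= cos a -> (forall i, P i -> sector a (F i)) -> sector a (\sum_(i | P i) F i).
Proof.
move=> c0 hF; apply: (big_ind (sector a)) => //; first exact: sector0.
by move=> z w; apply: sectorD.
Qed.

Lemma sectorD_neq0 a z w : 0 < cos a -> sector a z -> sector a w ->
  z != 0 \/ w != 0 -> z + w != 0.
Proof.
move=> c0 hz hw nz; apply: contraTneq isT => zw0.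
have := congr1 (@complex.Re R) zw0; rewrite ReD /=.
have := sector_Re_ge0 (ltW c0) hz; have := sector_Re_ge0 (ltW c0) hw.
by case: nz => [/(sector_Re_gt0 c0 hz) | /(sector_Re_gt0 c0 hw)]; lra.
Qed.

Lemma sector_sum_neq0 a (I : finType) (F : I -> C) k :
  0 < cos a -> (forall i, sector a (F i)) -> F k != 0 -> \sum_i F i != 0.
Proof.
move=> c0 hF nz; rewrite (bigD1 k) //=; apply: sectorD_neq0 (hF k) _ (or_introl nz) => //.
by apply: sector_sum => [|i _]; [exact: ltW | exact: hF].
Qed.

(* The sector bounds on the real parts bound the imaginary parts by [sin],
   and [cos (a + b) = cos a cos b - sin a sin b] does the rest. *)
Lemma sectorM a b z w : 0 <= a <= pi / 2 -> 0 <= b <= pi / 2 ->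
  sector a z -> sector b w -> sector (a + b) (z * w).
Proof.
have pi0 := pi_gt0 R.
have Im_le a' z' : 0 <= a' <= pi / 2 -> sector a' z' ->
    `|complex.Im z'| <= sin a' * normc z'.
  move=> /andP [a0 api] hz; have c0 : 0 <= cos a' by rewrite cos_ge0_pihalf ?api; lra.
  have s0 : 0 <= sin a' by rewrite sin_ge0_pi //; lra.
  have r0 := normc_ge0 z'; have csr0 : 0 <= cos a' * normc z' by rewrite mulr_ge0.
  rewrite -ler_sqr ?nnegrE ?mulr_ge0 // real_normK ?num_real //.
  have := cos2Dsin2 a'; have := sqr_normc_ReIm z'.
  have : (cos a' * normc z') ^+ 2 <= complex.Re z' ^+ 2.
    by rewrite ler_sqr ?nnegrE ?(le_trans csr0).
  rewrite !exprMn; nra.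
move=> ha hb hz hw; have Iz := Im_le _ _ ha hz; have Iw := Im_le _ _ hb hw.
have ca : 0 <= cos a by case/andP: ha => ? ?; rewrite cos_ge0_pihalf //; lra.
have cb : 0 <= cos b by case/andP: hb => ? ?; rewrite cos_ge0_pihalf //; lra.
rewrite /sector normcM cosD mulrBl.
have -> : complex.Re (z * w) = complex.Re z * complex.Re w - complex.Im z * complex.Im w.
  by case: z {hz Iz}; case: w {hw Iw}.
apply: lerB.
  by rewrite mulrACA ler_pM ?mulr_ge0 ?normc_ge0.
rewrite mulrACA; apply: le_trans (ler_norm _) _; rewrite normrM.
by rewrite ler_pM ?normr_ge0.
Qed.

End Sector.

Section AbsArg.
Variable R : realType.
Implicit Types (a b : R) (z : R[i]).

(* [abs_Arg z = |Arg z|] for [z != 0]. *)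
Definition abs_Arg z : R := acos (complex.Re z / normc z).

Lemma Re_div_normc_itv z : z != 0 -> -1 <= complex.Re z / normc z <= 1.
Proof.
move=> nz; have r0 := normc_gt0 nz; have := Re_le_normc z.
by rewrite ler_norml ler_pdivlMr // ler_pdivrMr // mulN1r mul1r.
Qed.

Lemma abs_Arg_ge0 z : z != 0 -> 0 <= abs_Arg z.
Proof. by move/Re_div_normc_itv; exact: acos_ge0. Qed.

Lemma sector_abs_Arg z : z != 0 -> sector (abs_Arg z) z.
Proof.
move=> nz; rewrite /sector /abs_Arg acosK ?in_itv /= ?Re_div_normc_itv //.
by rewrite divfK // gt_eqF // normc_gt0.
Qed.

Lemma abs_Arg_lt z a : arg_in z (- a) a -> abs_Arg z < a.
Proof. by rewrite /arg_in /Arg /abs_Arg -normc_ReIm => -[_]; case: ifP => _ /andP[]; lra. Qed.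

Lemma arg_in_sector z a b : z != 0 -> 0 <= a < b -> b <= pi -> sector a z ->
  arg_in z (- b) b.
Proof.
move=> nz /andP [a0 ab] bpi hz; have r0 := normc_gt0 nz.
have cba : cos b < cos a.
  by rewrite ltr_cos //; rewrite in_itv /=; apply/andP; split; lra.
have ltb : abs_Arg z < b.
  rewrite ltNge; apply/negP => hb.
  have := ler_cos (ltW (le_lt_trans a0 ab)) hb (acos_lepi (Re_div_normc_itv nz)).
  rewrite acosK ?in_itv /= ?Re_div_normc_itv // ler_pdivrMr // => hRe.
  have : cos b * normc z < cos a * normc z by rewrite ltr_pM2r.
  by move: hz; rewrite /sector; lra.
split=> //; rewrite /Arg -normc_ReIm -/(abs_Arg z).
have := abs_Arg_ge0 nz; by case: ifP => _; lra.
Qed.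

End AbsArg.

Section PosdefMx.
Variable R : realType.
Local Notation C := R[i].
Local Notation adj x := (map_mx (@conjc R) x)^T.

Lemma hermitian_mxE n (M : 'M[C]_n) i j : hermitian_mx M -> M i j = (M j i)^*%C.
Proof. by move=> hM; rewrite -{1}hM !mxE. Qed.

Lemma hermitian_invmx n (M : 'M[C]_n) : hermitian_mx M -> hermitian_mx (invmx M).
Proof. by move=> hM; rewrite /hermitian_mx /adjmx map_invmx trmx_inv; congr invmx. Qed.

Lemma hermitian_mxsub k n (f : 'I_k -> 'I_n) (M : 'M[C]_n) :
  hermitian_mx M -> hermitian_mx (mxsub f f M).
Proof. by move=> hM; apply/matrixP => i j; rewrite !mxE -hermitian_mxE. Qed.

Lemma posdef_mx_unit n (M : 'M[C]_n) : posdef_mx M -> M \in unitmx.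
Proof.
move=> hM; rewrite -row_full_unit -cokermx_eq0; apply/eqP/matrixP => i j.
rewrite mxE; apply/eqP/contraT => nz; have /hM : col j (cokermx M) != 0.
  by apply: contra nz => /eqP/matrixP/(_ i 0); rewrite !mxE => ->.
by rewrite colE -mulmxA (mulmxA M) mulmx_coker mul0mx mulmx0 mxE ltxx.
Qed.

Lemma posdef_mx_diag_gt0 n (M : 'M[C]_n) i : posdef_mx M -> 0 < M i i.
Proof.
move=> hM; have /hM : delta_mx i 0 != 0 :> 'cV[C]_n.
  by apply/negP => /eqP/matrixP/(_ i 0); rewrite !mxE !eqxx => /eqP; rewrite oner_eq0.
have -> : adj (delta_mx i 0 : 'cV[C]_n) = delta_mx 0 i.
  by apply/matrixP => a b; rewrite !mxE andbC conjc_nat.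
by rewrite -rowE -colE !mxE.
Qed.

Lemma posdef_invmx n (M : 'M[C]_n) :
  hermitian_mx M -> posdef_mx M -> posdef_mx (invmx M).
Proof.
move=> hH hM x xnz; set y := invmx M *m x.
have xE : x = M *m y by rewrite /y mulmxA mulmxV ?mul1mx ?posdef_mx_unit.
have /hM : y != 0 by apply: contraNneq xnz => y0; rewrite xE y0 mulmx0.
suff -> : adj x *m invmx M *m x = adj y *m M *m y by [].
by rewrite {1}xE map_mxM trmx_mul [adj M]hH /y !mulmxA.
Qed.

Lemma posdef_mxsub k n (f : 'I_k -> 'I_n) (M : 'M[C]_n) :
  injective f -> posdef_mx M -> posdef_mx (mxsub f f M).
Proof.
move=> f_inj hM x xnz; pose S : 'M[C]_(k, n) := rowsub f 1%:M.
have SME : mxsub f f M = S *m M *m S^T.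
  rewrite -[S *m _ *m _]trmxK trmx_mul trmxK /S !mul_rowsub_mx !mul1mx.
  by apply/matrixP => i j; rewrite !mxE.
have SST : S *m S^T = 1%:M.
  rewrite /S mul_rowsub_mx mul1mx; apply/matrixP => i j; rewrite !mxE.
  by rewrite (inj_eq f_inj) eq_sym.
have /hM : S^T *m x != 0.
  by apply: contraNneq xnz => y0; rewrite -(mul1mx x) -SST -mulmxA y0 mulmx0.
have SR : map_mx (@conjc R) S = S by apply/matrixP => i j; rewrite !mxE conjc_nat.
by rewrite map_mxM trmx_mul -map_trmx trmxK SR SME !mulmxA.
Qed.

End PosdefMx.

Section SchurComplement.
Variable R : realType.
Local Notation C := R[i].
Variables (m : nat) (M : 'M[C]_m.+2).
Local Notation L := (@ord_max m.+1).
Local Notation li := (lift (@ord_max m.+1)).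

Definition schur : 'M[C]_m.+1 :=
  \matrix_(i, j) (M (li i) (li j) - M (li i) L * M L (li j) / M L L).

Hypotheses (M_unit : M \in unitmx) (MLL_neq0 : M L L != 0).

Lemma schur_mulmx_invmx i c : \sum_k schur i k * invmx M (li k) c =
  (li i == c)%:R - M (li i) L / M L L * (L == c)%:R.
Proof.
have row_inv a : \sum_k M a (li k) * invmx M (li k) c = (a == c)%:R - M a L * invmx M L c.
  have /matrixP/(_ a c) := mulmxV M_unit.
  by rewrite !mxE (bigD1_ord L) //= => <-; ring.
rewrite (eq_bigr (fun k => M (li i) (li k) * invmx M (li k) c -
  M (li i) L / M L L * (M L (li k) * invmx M (li k) c))) => [|k _]; last by rewrite mxE; ring.
by rewrite sumrB -mulr_sumr !row_inv; field.
Qed.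

Lemma schur_mulmx_mxsub_invmx : schur *m mxsub li li (invmx M) = 1%:M.
Proof.
apply/matrixP => i j; rewrite !mxE.
under eq_bigr do rewrite [mxsub _ _ _ _ _]mxE.
by rewrite schur_mulmx_invmx (inj_eq lift_inj) (negbTE (neq_lift _ _)) mulr0 subr0.
Qed.

Lemma invmx_schur : invmx schur = mxsub li li (invmx M).
Proof.
have [schur_unit _] := mulmx1_unit schur_mulmx_mxsub_invmx.
by rewrite -[LHS]mulmx1 -schur_mulmx_mxsub_invmx mulmxA mulVmx ?mul1mx.
Qed.

Lemma invmx_lift_last i :
  invmx M (li i) L = \sum_k invmx schur i k * - M (li k) L / M L L.
Proof.
have : schur *m \col_k invmx M (li k) L = \col_k (- M (li k) L / M L L).
  apply/matrixP => k z; rewrite !mxE.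
  under eq_bigr do rewrite [X in _ * X]mxE.
  rewrite schur_mulmx_invmx [lift _ _ == _]eq_sym (negbTE (neq_lift _ _)) eqxx.
  by rewrite sub0r mulr1 mulNr.
have [schur_unit _] := mulmx1_unit schur_mulmx_mxsub_invmx.
move/(congr1 (mulmx (invmx schur))); rewrite mulmxA mulVmx // mul1mx.
move/matrixP/(_ i 0); rewrite !mxE => ->.
by apply: eq_bigr => k _; rewrite mxE mulrA.
Qed.

End SchurComplement.

Section Connectivity.
Variable T : zmodType.

Definition mx_connected n (M : 'M[T]_n) : Prop :=
  forall S : {set 'I_n}, S != set0 -> S != setT ->
  exists i j, [/\ i \in S, j \notin S & M i j != 0].

Lemma perm_first_block n (S : {set 'I_n}) :
  exists s : 'S_n, forall i, (s i \in S) = (i < #|S|)%N.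
Proof.
case: n S => [|n] S; first by exists 1%g => -[].
pose sq := enum S ++ enum (~: S).
have size_sq : size sq = n.+1 by rewrite size_cat -!cardE cardsC card_ord.
have sq_uniq : uniq sq.
  by rewrite cat_uniq !enum_uniq andbT /=; apply/hasPn => z; rewrite !mem_enum inE.
have f_inj : injective (fun i : 'I_n.+1 => nth ord0 sq i).
  by move=> i j /eqP; rewrite nth_uniq ?size_sq // => /eqP /ord_inj.
exists (perm f_inj) => i; rewrite permE nth_cat -cardE.
case: ltnP => hi; first by rewrite -mem_enum mem_nth // -cardE.
have : nth ord0 (enum (~: S)) (i - #|S|) \in ~: S.
  by rewrite -mem_enum mem_nth // -cardE ltn_subLR // cardsC card_ord.
by rewrite inE => /negbTE.
Qed.

Lemma mx_connected_elim_last m (M : 'M[T]_m.+2) (N : 'M[T]_m.+1) :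
  let L := ord_max in
  mx_connected M ->
  (forall i j, i != j ->
    M (lift L i) (lift L j) != 0 \/ (M (lift L i) L != 0 /\ M L (lift L j) != 0) ->
    N i j != 0) ->
  mx_connected N.
Proof.
move=> L hM hN S S0 ST.
have edge i j : i \in S -> j \notin S ->
    M (lift L i) (lift L j) != 0 \/ (M (lift L i) L != 0 /\ M L (lift L j) != 0) ->
    exists i j, [/\ i \in S, j \notin S & N i j != 0].
  move=> iS jS h; exists i, j; split => //; apply: hN h.
  by apply: contraNneq jS => <-.
have [x xS] := set0Pn _ S0.
have [y _ yS] : exists2 y, y \in setT & y \notin S by apply/subsetPn; rewrite subTset.
have liS k : (lift L k \in lift L @: S) = (k \in S) by rewrite mem_imset //; exact: lift_inj.
have LS : L \notin lift L @: S.
  by apply/imsetP => -[k _ /eqP]; rewrite (negbTE (neq_lift _ _)).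
have [a [b [aS bS ab]]] : exists a b,
    [/\ a \in L |: lift L @: S, b \notin L |: lift L @: S & M a b != 0].
  apply: hM; first by apply/set0Pn; exists L; rewrite !inE eqxx.
  apply/eqP => /setP /(_ (lift L y)).
  by rewrite !inE liS (negbTE yS) eq_sym (negbTE (neq_lift _ _)).
case: (unliftP L b) bS ab => [j ->|->]; last by rewrite !inE eqxx.
rewrite !inE negb_or liS => /andP [_ jS].
case/setU1P: aS => [->|/imsetP [i iS ->]] ab; last by apply: edge iS jS _; left.
have [a' [b' [aS' bS' ab']]] : exists a b,
    [/\ a \in lift L @: S, b \notin lift L @: S & M a b != 0].
  apply: hM; first by apply/set0Pn; exists (lift L x); rewrite liS.
  by apply: contraNneq LS => ->; rewrite inE.
case/imsetP: aS' ab' => i iS -> ab'.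
case: (unliftP L b') bS' ab' => [j' ->|->] bS' ab'; last by apply: edge iS jS _; right.
by move: bS'; rewrite liS => j'S; apply: edge iS j'S _; left.
Qed.

End Connectivity.

Section InverseSector.
Variable R : realType.
Local Notation C := R[i].

Lemma irreducible_mx_connected n (M : 'M[C]_n) :
  hermitian_mx M -> irreducible_mx M -> mx_connected M.
Proof.
move=> hM hI S S0 ST.
case: (boolP [exists i, exists j, [&& i \in S, j \notin S & M i j != 0]]).
  by case/existsP => i /existsP [j /and3P [iS jS ij]]; exists i, j.
move=> /existsPn none; exfalso; apply: hI.
have cross0 i j : i \in S -> j \notin S -> M i j = 0.
  by move=> iS jS; apply/eqP; move: (none i) => /existsPn /(_ j); rewrite iS jS negbK.
have [s hs] := perm_first_block S.
exists s, #|S|; split.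
  by rewrite card_gt0 S0 /= -[X in (_ < X)%N]card_ord -cardsT proper_card // properT.
move=> i j; rewrite !mxE -!hs.
case: (boolP (s i \in S)) => si; case: (boolP (s j \in S)) => sj //= _.
  by rewrite cross0.
by rewrite hermitian_mxE // cross0 // conjc0.
Qed.

Lemma invmx_diag_sector n (M : 'M[C]_n) (a : R) i :
  hermitian_mx M -> posdef_mx M -> 0 <= a <= pi ->
  invmx M i i != 0 /\ sector a (invmx M i i).
Proof.
move=> M_herm M_posdef a_itv.
have pos := posdef_mx_diag_gt0 i (posdef_invmx M_herm M_posdef).
split; first exact: lt0r_neq0.
by case/andP: a_itv => a0 api; apply: sector_le (sector_gt0 pos); rewrite ?lexx.
Qed.

Section Step.
Variable m : nat.
Hypothesis IH : forall (t : R) (N : 'M[C]_m.+1), 0 <= t -> 2 ^+ m * t < pi / 2 ->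
  hermitian_mx N -> posdef_mx N -> mx_connected N ->
  (forall i j, i != j -> sector t (- N i j)) ->
  forall i j, i != j -> invmx N i j != 0 /\ sector ((2 ^+ m - 1) * t) (invmx N i j).
Variables (t : R) (M : 'M[C]_m.+2).
Hypotheses (t_ge0 : 0 <= t) (t_lt : 2 ^+ m.+1 * t < pi / 2).
Hypotheses (M_herm : hermitian_mx M) (M_posdef : posdef_mx M) (M_conn : mx_connected M).
Hypothesis M_sector : forall i j, i != j -> sector t (- M i j).
Local Notation L := (@ord_max m.+1).
Local Notation li := (lift (@ord_max m.+1)).

Let exp2_ge1 : 1 <= 2 ^+ m :> R.
Proof. by rewrite exprn_ege1 // ler1n. Qed.
Let tt_lt : t + t < pi / 2.
Proof. by move: t_lt; rewrite exprS -mulrA; have := ler_wpM2r t_ge0 exp2_ge1; lra. Qed.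
Let MLL_gt0 : 0 < M L L := posdef_mx_diag_gt0 L M_posdef.
Let MLL_neq0 : M L L != 0 := lt0r_neq0 MLL_gt0.
Let M_unit : M \in unitmx := posdef_mx_unit M_posdef.
Let cos_tt_gt0 : 0 < cos (t + t).
Proof. by apply: cos_gt0_pihalf; have := tt_lt; have := t_ge0; have := pi_gt0 R; lra. Qed.

Lemma sector_invMLL : sector 0 (M L L)^-1.
Proof. by apply: sector_gt0; rewrite invr_gt0. Qed.

Lemma schur_offdiag_parts i j : i != j ->
  sector (t + t) (- M (li i) (li j)) /\
  sector (t + t) (- M (li i) L * - M L (li j) / M L L).
Proof.
move=> ij; have tt := tt_lt; have t0 := t_ge0; have pi0 := pi_gt0 R; split.
  apply: (sector_le (a := t)); [rewrite t0 /=; lra | lra |].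
  by apply: M_sector; rewrite (inj_eq lift_inj).
rewrite -[t + t]addr0; apply: sectorM; [| rewrite lexx /=; lra | | exact: sector_invMLL].
  by rewrite addr_ge0 //=; lra.
apply: sectorM; rewrite ?t0 /=; try lra.
  by apply: M_sector; rewrite eq_sym neq_lift.
exact/M_sector/neq_lift.
Qed.

Lemma schur_offdiag_sector i j : i != j -> sector (t + t) (- schur M i j).
Proof.
move=> /schur_offdiag_parts [h1 h2].
have -> : - schur M i j = - M (li i) (li j) + - M (li i) L * - M L (li j) / M L L.
  by rewrite mxE; ring.
exact: sectorD (ltW cos_tt_gt0) h1 h2.
Qed.

Lemma schur_offdiag_neq0 i j : i != j ->
  M (li i) (li j) != 0 \/ (M (li i) L != 0 /\ M L (li j) != 0) -> schur M i j != 0.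
Proof.
move=> ij nz; have [h1 h2] := schur_offdiag_parts ij.
have -> : schur M i j = - (- M (li i) (li j) + - M (li i) L * - M L (li j) / M L L).
  by rewrite mxE; ring.
rewrite oppr_eq0; apply: sectorD_neq0 cos_tt_gt0 h1 h2 _.
case: nz => [nz | [nz1 nz2]]; [left | right]; first by rewrite oppr_eq0.
by rewrite !mulf_neq0 ?oppr_eq0 ?invr_eq0.
Qed.

Lemma schur_connected : mx_connected (schur M).
Proof. exact: mx_connected_elim_last M_conn schur_offdiag_neq0. Qed.

Lemma schur_eq_invmx : schur M = invmx (mxsub li li (invmx M)).
Proof. by rewrite -invmx_schur ?invmxK. Qed.

Lemma hermitian_schur : hermitian_mx (schur M).
Proof. by rewrite schur_eq_invmx; apply/hermitian_invmx/hermitian_mxsub/hermitian_invmx. Qed.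

Lemma posdef_schur : posdef_mx (schur M).
Proof.
rewrite schur_eq_invmx; apply: posdef_invmx; first exact/hermitian_mxsub/hermitian_invmx.
exact: posdef_mxsub lift_inj (posdef_invmx M_herm M_posdef).
Qed.

Let A_ge0 : 0 <= (2 ^+ m - 1) * (t + t).
Proof. by rewrite mulr_ge0 ?subr_ge0 ?addr_ge0. Qed.

Let At_lt : (2 ^+ m - 1) * (t + t) + t < pi / 2.
Proof. by have := t_ge0; move: t_lt; rewrite exprS; nra. Qed.

Lemma invmx_schur_sector i k : invmx (schur M) i k != 0 /\
  sector ((2 ^+ m - 1) * (t + t)) (invmx (schur M) i k).
Proof.
have [->|ik] := eqVneq i k.
  apply: invmx_diag_sector hermitian_schur posdef_schur _; rewrite A_ge0 /=.
  by have := At_lt; have := t_ge0; have := pi_gt0 R; lra.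
apply: IH => //; [exact: addr_ge0 | | exact: hermitian_schur | exact: posdef_schur |
  exact: schur_connected | exact: schur_offdiag_sector].
by move: t_lt; rewrite exprS mulrDr -mulrA mulr2n mulrDl !mul1r.
Qed.

Lemma invmx_lift_last_sector i : invmx M (li i) L != 0 /\
  sector ((2 ^+ m - 1) * (t + t) + t) (invmx M (li i) L).
Proof.
have pi0 := pi_gt0 R; have t0 := t_ge0; have A0 := A_ge0; have lt := At_lt.
have cos_gt0 : 0 < cos ((2 ^+ m - 1) * (t + t) + t) by apply: cos_gt0_pihalf; lra.
have term k : sector ((2 ^+ m - 1) * (t + t) + t)
    (invmx (schur M) i k * - M (li k) L / M L L).
  rewrite -[X in sector X]addr0.
  apply: sectorM; [rewrite (addr_ge0 A0 t0) /=; lra | rewrite lexx /=; lra | |].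
    apply: sectorM; [rewrite A0 /=; lra | rewrite t0 /=; lra | |].
      exact: (invmx_schur_sector i k).2.
    by apply: M_sector; rewrite eq_sym neq_lift.
  exact: sector_invMLL.
rewrite (invmx_lift_last M_unit MLL_neq0); split; last first.
  by apply: sector_sum => [|k _]; [exact: ltW | exact: term].
have [a [b [aL bL ab]]] : exists a b, [/\ a \in [set L], b \notin [set L] & M a b != 0].
  apply: M_conn; first by apply/set0Pn; exists L; rewrite inE.
  by apply/eqP => /setP /(_ (li ord0)); rewrite !inE eq_sym (negbTE (neq_lift _ _)).
move: aL ab; rewrite inE => /eqP -> ab.
case: (unliftP L b) bL ab => [k ->|->] bL ab; last by rewrite inE eqxx in bL.
apply: (sector_sum_neq0 (k := k) cos_gt0 term).
rewrite !mulf_neq0 ?invr_eq0 ?oppr_eq0 //; first exact: (invmx_schur_sector i k).1.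
by rewrite hermitian_mxE // conjc_eq0.
Qed.

Lemma invmx_offdiag_sector_step a b : a != b ->
  invmx M a b != 0 /\ sector ((2 ^+ m.+1 - 1) * t) (invmx M a b).
Proof.
have -> : (2 ^+ m.+1 - 1) * t = (2 ^+ m - 1) * (t + t) + t by rewrite exprS; ring.
case: (unliftP L a) => [i ->|->]; case: (unliftP L b) => [j ->|->] // ab.
- have [nz hs] := invmx_schur_sector i j.
  move: nz hs; rewrite (invmx_schur M_unit MLL_neq0) mxE => nz hs; split => //.
  apply: sector_le hs; first by rewrite A_ge0 lerDl t_ge0.
  by have := At_lt; have := pi_gt0 R; lra.
- exact: invmx_lift_last_sector.
- rewrite hermitian_mxE; last exact: hermitian_invmx.
  have [nz hs] := invmx_lift_last_sector j.
  by rewrite conjc_eq0; split => //; exact: sectorJ.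
- by rewrite eqxx in ab.
Qed.

End Step.

Lemma invmx_offdiag_sector m (t : R) (M : 'M[C]_m.+1) :
  0 <= t -> 2 ^+ m * t < pi / 2 ->
  hermitian_mx M -> posdef_mx M -> mx_connected M ->
  (forall i j, i != j -> sector t (- M i j)) ->
  forall i j, i != j -> invmx M i j != 0 /\ sector ((2 ^+ m - 1) * t) (invmx M i j).
Proof.
elim: m t M => [|m IH] t M.
  by move=> _ _ _ _ _ _ i j; rewrite !ord1 eqxx.
exact: (@invmx_offdiag_sector_step _ IH t M).
Qed.

Lemma invmx_sector m (t : R) (M : 'M[C]_m.+1) :
  0 <= t -> 2 ^+ m * t < pi / 2 ->
  hermitian_mx M -> posdef_mx M -> mx_connected M ->
  (forall i j, i != j -> sector t (- M i j)) ->
  forall i j, invmx M i j != 0 /\ sector ((2 ^+ m - 1) * t) (invmx M i j).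
Proof.
move=> t_ge0 t_lt M_herm M_posdef M_conn M_sector i j.
have [<-|ij] := eqVneq i j; last exact: invmx_offdiag_sector.
have exp2_ge1 : 1 <= 2 ^+ m :> R by rewrite exprn_ege1 // ler1n.
apply: invmx_diag_sector => //; rewrite mulr_ge0 ?subr_ge0 //=.
by have := pi_gt0 R; nra.
Qed.

Lemma exists_common_sector (I : finType) (P : pred I) (F : I -> C) (th : R) :
  0 < th -> th <= pi -> (forall i, P i -> arg_in (F i) (- th) th) ->
  exists2 t, 0 <= t < th & forall i, P i -> sector t (F i).
Proof.
move=> th_gt0 th_le hF; pose t := \big[Order.max/0]_(i | P i) abs_Arg (F i).
have t_lt : t < th by apply: bigmax_lt => // i /hF /abs_Arg_lt.
exists t; first by rewrite bigmax_ge_id.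
move=> i Pi; have [nz _] := hF i Pi.
apply: (sector_le (a := abs_Arg (F i))); last exact: sector_abs_Arg.
  by rewrite abs_Arg_ge0 //= /t (bigD1 i) //= le_max lexx.
exact: le_trans (ltW t_lt) th_le.
Qed.

End InverseSector.

Unset Implicit Arguments.
Set Strict Implicit.
Set Printing Implicit Defensive.

Theorem lemma4 (R : realType) (n : nat) (M : 'M[R[i]]_n) :
  (2 <= n)%N ->
  hermitian_mx M -> posdef_mx M -> irreducible_mx M ->
  (forall i j : 'I_n, i != j -> M i j != 0 ->
     arg_in (- M i j) (- (pi / 2 ^+ n)) (pi / 2 ^+ n)) ->
  forall i j : 'I_n,
    arg_in (invmx M i j) (- (pi / 2) + pi / 2 ^+ n) (pi / 2 - pi / 2 ^+ n).
Proof.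
case: n M => [|m] // M m_gt0 M_herm M_posdef M_irr M_arg i j.
set th := pi / 2 ^+ m.+1; have pi0 := pi_gt0 R.
have th_gt0 : 0 < th by rewrite divr_gt0 ?exprn_gt0.
have exp2_th : 2 ^+ m * th = pi / 2.
  by rewrite /th exprS; field; rewrite expf_neq0 ?pnatr_eq0.
have exp2_ge2 : 2 <= 2 ^+ m :> R.
  by rewrite -(prednK m_gt0) exprS ler_peMr // exprn_ege1 // ler1n.
have th_le_pi : th <= pi by nra.
have offdiag_arg (p : 'I_m.+1 * 'I_m.+1) : (p.1 != p.2) && (M p.1 p.2 != 0) ->
    arg_in (- M p.1 p.2) (- th) th.
  by case/andP; exact: M_arg.
have [t /andP [t_ge0 t_lt] offdiag_sector] :=
  exists_common_sector th_gt0 th_le_pi offdiag_arg.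
have M_sector k l : k != l -> sector t (- M k l).
  move=> kl; have [->|nz] := eqVneq (M k l) 0; first by rewrite oppr0; exact: sector0.
  by apply: (offdiag_sector (k, l)); rewrite /= kl nz.
have exp2_t : 2 ^+ m * t < pi / 2 by rewrite -exp2_th ltr_pM2l ?exprn_gt0.
have [inv_nz inv_sector] := invmx_sector t_ge0 exp2_t M_herm M_posdef
  (irreducible_mx_connected M_herm M_irr) M_sector i j.
have -> : - (pi / 2) + th = - (pi / 2 - th) by ring.
apply: arg_in_sector inv_nz _ _ inv_sector; last by lra.
by rewrite mulr_ge0 /= ?subr_ge0; [nra | lra | lra].
Qed.
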